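(* Consider the Normal Partizan Domination game on a star $K_{1,n}$ whose universal (center) vertex has color $A$, with $a$ leaves of color $A$, $b$ leaves of color $B$ and $c=n-a-b\geq 1$ leaves of color $C$. If $a=0$, the value is $(n-1)\cdot\uparrow$ if $n$ is even and $(n-1)\cdot\uparrow*$ if $n$ is odd. If $a>0$, the value is $J$ if $c$ is even and $J*$ if $c$ is odd, where $J$ is the value of the game on the star obtained by removing the $c$ leaves of color $C$ (keeping all other colors). If instead the universal vertex has color $B$, the value is $-J'$, where $J'$ is the value of the game obtained by interchanging the colors $A$ and $B$ on all vertices.
   Context: Normal Partizan Domination game: a finite graph $G$ has each vertex colored $A$, $B$ or $C$. Alice and Bob alternately select a vertex; Alice may only select vertices colored $A$ or $C$, Bob only vertices colored $B$ or $C$. A vertex $u$ dominates $v$ if $u=v$ or $uv$ is an edge. A vertex may be selected only if it is playable, i.e. it dominates at least one vertex not dominated by the previously selected vertices; the game ends when the selected vertices form a dominating set. Under normal play the player unable to move loses. The game is regarded as a partizan combinatorial game with Alice as Left and Bob as Right, and its value is its value in Conway's combinatorial game theory ($\{X\mid Y\}$ has Left options $X$ and Right options $Y$; $G+H$ is the disjunctive sum; $-G$ swaps Left and Right; $G=H$ iff $G+(-H)$ is a second-player win). Notation: $*=\{0\mid 0\}$; $\uparrow=\{0\mid *\}$; $m\cdot\uparrow$ is the sum of $m$ copies of $\uparrow$ (and $0\cdot\uparrow=0$); $J*$ denotes $J+*$. *)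

From HB Require Import structures.
From mathcomp Require Import all_boot.
Set Implicit Arguments. Unset Strict Implicit. Unset Printing Implicit Defensive.

Inductive game : Type :=
  Game (nl : nat) (L : 'I_nl -> game) (nr : nat) (R : 'I_nr -> game).

Lemma I0_False : 'I_0 -> False.
Proof. by case. Qed.

Definition no_opt (i : 'I_0) : game := False_rect game (I0_False i).

Definition g0 : game := Game no_opt no_opt.

(* Outcomes under normal play: (Left moving first wins, Right moving first wins). *)
Fixpoint outcome (G : game) : Prop * Prop :=
  match G with
  | Game nl L nr R =>
      ((exists i : 'I_nl, ~ (outcome (L i)).2),
       (exists j : 'I_nr, ~ (outcome (R j)).1))
  end.

Definition left_first_wins (G : game) : Prop := (outcome G).1.
Definition right_first_wins (G : game) : Prop := (outcome G).2.
Definition second_player_win (G : game) : Prop :=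
  ~ left_first_wins G /\ ~ right_first_wins G.

Fixpoint gneg (G : game) : game :=
  match G with
  | Game nl L nr R => Game (fun j => gneg (R j)) (fun i => gneg (L i))
  end.

Fixpoint gadd (G H : game) {struct G} : game :=
  match G with
  | Game nl L nr R =>
      let fix gadd_aux (H : game) : game :=
        match H with
        | Game ml L' mr R' =>
            Game (fun k : 'I_(nl + ml) =>
                    match split k with
                    | inl i => gadd (L i) H
                    | inr i => gadd_aux (L' i)
                    end)
                 (fun k : 'I_(nr + mr) =>
                    match split k with
                    | inl j => gadd (R j) H
                    | inr j => gadd_aux (R' j)
                    end)
        end
      in gadd_aux H
  end.

Definition game_eq (G H : game) : Prop := second_player_win (gadd G (gneg H)).

Definition gstar : game := Game (fun _ : 'I_1 => g0) (fun _ : 'I_1 => g0).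
Definition gup : game := Game (fun _ : 'I_1 => g0) (fun _ : 'I_1 => gstar).
Fixpoint mul_up (m : nat) : game :=
  match m with 0 => g0 | m'.+1 => gadd gup (mul_up m') end.

Inductive colour := CA | CB | CC.

Definition colour_eqb (x y : colour) : bool :=
  match x, y with CA, CA | CB, CB | CC, CC => true | _, _ => false end.
Lemma colour_eqP : Equality.axiom colour_eqb.
Proof. by case; case; constructor. Qed.
HB.instance Definition _ := hasDecEq.Build colour colour_eqP.

(* Alice (Left) may select A or C vertices, Bob (Right) B or C vertices. *)
Definition left_col (c : colour) : bool := c != CB.
Definition right_col (c : colour) : bool := c != CA.

Section Domination.
Variables (V : finType) (adj : rel V) (col : V -> colour) (W : {set V}).
(* The game is played on the subgraph of (V, adj) induced by W. *)

Definition cnbhd (v : V) : {set V} := [set u in W | (u == v) || adj v u].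

(* v is playable when D is the set of already dominated vertices *)
Definition playable (D : {set V}) (v : V) : bool :=
  (v \in W) && ~~ (cnbhd v \subset D).

(* game from position D, with fuel k (each move strictly enlarges D,
   so fuel #|V|.+1 is never exhausted) *)
Fixpoint dom_aux (k : nat) (D : {set V}) : game :=
  match k with
  | 0 => g0
  | k'.+1 =>
      let sL := [seq v <- enum V | playable D v && left_col (col v)] in
      let sR := [seq v <- enum V | playable D v && right_col (col v)] in
      Game (fun i : 'I_(size sL) => dom_aux k' (D :|: cnbhd (tnth (in_tuple sL) i)))
           (fun j : 'I_(size sR) => dom_aux k' (D :|: cnbhd (tnth (in_tuple sR) j)))
  end.

Definition dom_game : game := dom_aux #|V|.+1 set0.
End Domination.

(* K_{1,n}: vertex None is the centre, Some i (i < n) are the leaves. *)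
Definition star_adj (n : nat) : rel (option 'I_n) :=
  fun x y => xorb (x == None) (y == None).

Definition swap_col (c : colour) : colour :=
  match c with CA => CB | CB => CA | CC => CC end.

(* A position of the game on the star is determined, up to isomorphism of game
   trees, by the numbers a, b, c of undominated A-, B- and C-leaves: playing a
   leaf decrements its count and dominates the centre, and Alice may play the
   A-centre, ending the game, while some leaf is undominated (star_game a b c).
   Without A-leaves this is the tower {0 | {0 | ... {0 | 0}}} of height b + c,
   and the identity {0 | T} = up + * + T for towers T of positive height shows
   that the tower of height m + 1 is m.up, plus * when m is even.  With an A-leaf,
   comparing options by induction shows that each C-leaf acts as a copy of *, so
   star_game a b c = star_game a b 0 + (c mod 2).*.  Swapping A and B exchanges
   the players' moves, hence negates the game.  Values are compared through
   Conway's recursive characterisation of G <= H (gleE), obtained from the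
   outcome definition via the group laws of disjunctive sums up to isomorphism. *)

From mathcomp Require Import all_boot zify.
From Stdlib Require Import Classical Setoid Morphisms.
From Stdlib Require List.
Set Implicit Arguments. Unset Strict Implicit. Unset Printing Implicit Defensive.

Notation lfw := left_first_wins.
Notation rfw := right_first_wins.

Definition lopt (G X : game) : Prop := let: Game _ L _ _ := G in exists i, L i = X.
Definition ropt (G X : game) : Prop := let: Game _ _ _ R := G in exists j, R j = X.

Lemma game_opt_ind (P : game -> Prop) :
  (forall G, (forall X, lopt G X -> P X) -> (forall X, ropt G X -> P X) -> P G) ->
  forall G, P G.
Proof. by move=> IH; elim=> nl L IHL nr R IHR; apply: IH => X [i <-]. Qed.

Lemma lfwE G : lfw G <-> exists X, lopt G X /\ ~ rfw X.
Proof.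
case: G => nl L nr R; split; first by case=> i Hi; exists (L i); split => //; exists i.
by case=> X [[i <-] H]; exists i.
Qed.

Lemma rfwE G : rfw G <-> exists X, ropt G X /\ ~ lfw X.
Proof.
case: G => nl L nr R; split; first by case=> i Hi; exists (R i); split => //; exists i.
by case=> X [[i <-] H]; exists i.
Qed.

Lemma lopt_g0 X : ~ lopt g0 X. Proof. by case=> i; case: (I0_False i). Qed.
Lemma ropt_g0 X : ~ ropt g0 X. Proof. by case=> i; case: (I0_False i). Qed.

Lemma lopt_gadd G H X : lopt (gadd G H) X <->
  (exists G', lopt G G' /\ X = gadd G' H) \/ (exists H', lopt H H' /\ X = gadd G H').
Proof.
case: G => nl L nr R; case: H => ml L' mr R'; split.
- case=> k <-; case: (split k) => [i|j].
  + by left; exists (L i); split => //; exists i.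
  + by right; exists (L' j); split => //; exists j.
- case=> [[G' [[i <-] ->]]|[H' [[j <-] ->]]].
  + by exists (lshift ml i); rewrite /= (unsplitK (inl i)).
  + by exists (rshift nl j); rewrite /= (unsplitK (inr j)).
Qed.

Lemma ropt_gadd G H X : ropt (gadd G H) X <->
  (exists G', ropt G G' /\ X = gadd G' H) \/ (exists H', ropt H H' /\ X = gadd G H').
Proof.
case: G => nl L nr R; case: H => ml L' mr R'; split.
- case=> k <-; case: (split k) => [i|j].
  + by left; exists (R i); split => //; exists i.
  + by right; exists (R' j); split => //; exists j.
- case=> [[G' [[i <-] ->]]|[H' [[j <-] ->]]].
  + by exists (lshift mr i); rewrite /= (unsplitK (inl i)).
  + by exists (rshift nr j); rewrite /= (unsplitK (inr j)).
Qed.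

Lemma lopt_gaddl G H X : lopt G X -> lopt (gadd G H) (gadd X H).
Proof. by move=> hX; apply/lopt_gadd; left; exists X. Qed.
Lemma lopt_gaddr G H X : lopt H X -> lopt (gadd G H) (gadd G X).
Proof. by move=> hX; apply/lopt_gadd; right; exists X. Qed.
Lemma ropt_gaddl G H X : ropt G X -> ropt (gadd G H) (gadd X H).
Proof. by move=> hX; apply/ropt_gadd; left; exists X. Qed.
Lemma ropt_gaddr G H X : ropt H X -> ropt (gadd G H) (gadd G X).
Proof. by move=> hX; apply/ropt_gadd; right; exists X. Qed.

Lemma lopt_gneg G X : lopt (gneg G) X <-> exists Y, ropt G Y /\ X = gneg Y.
Proof.
case: G => nl L nr R; split; first by case=> i <-; exists (R i); split => //; exists i.
by case=> Y [[i <-] ->]; exists i.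
Qed.

Lemma ropt_gneg G X : ropt (gneg G) X <-> exists Y, lopt G Y /\ X = gneg Y.
Proof.
case: G => nl L nr R; split; first by case=> i <-; exists (L i); split => //; exists i.
by case=> Y [[i <-] ->]; exists i.
Qed.

Lemma lopt_gnegE G Y : ropt G Y -> lopt (gneg G) (gneg Y).
Proof. by move=> hY; apply/lopt_gneg; exists Y. Qed.
Lemma ropt_gnegE G Y : lopt G Y -> ropt (gneg G) (gneg Y).
Proof. by move=> hY; apply/ropt_gneg; exists Y. Qed.

Lemma lfw_rfw_gneg G : (lfw (gneg G) <-> rfw G) /\ (rfw (gneg G) <-> lfw G).
Proof.
elim/game_opt_ind: G => G IHL IHR; rewrite lfwE rfwE rfwE lfwE; split; split.
- by case=> _ [/lopt_gneg [Y [hY ->]] hn]; exists Y; split => //; rewrite -(proj2 (IHR Y hY)).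
- by case=> Y [hY hn]; exists (gneg Y); split; [exact: lopt_gnegE | rewrite (proj2 (IHR Y hY))].
- by case=> _ [/ropt_gneg [Y [hY ->]] hn]; exists Y; split => //; rewrite -(proj1 (IHL Y hY)).
- by case=> Y [hY hn]; exists (gneg Y); split; [exact: ropt_gnegE | rewrite (proj1 (IHL Y hY))].
Qed.

Lemma lfw_gneg G : lfw (gneg G) <-> rfw G. Proof. exact: (lfw_rfw_gneg G).1. Qed.
Lemma rfw_gneg G : rfw (gneg G) <-> lfw G. Proof. exact: (lfw_rfw_gneg G).2. Qed.

Fixpoint giso (G H : game) : Prop :=
  match G, H with
  | Game _ L _ R, Game _ L' _ R' =>
    [/\ forall i, exists j, giso (L i) (L' j), forall j, exists i, giso (L i) (L' j),
        forall i, exists j, giso (R i) (R' j) & forall j, exists i, giso (R i) (R' j)]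
  end.

Definition opt_corr (r : game -> game -> Prop) (G H : game) : Prop :=
  [/\ forall X, lopt G X -> exists2 Y, lopt H Y & r X Y,
      forall Y, lopt H Y -> exists2 X, lopt G X & r X Y,
      forall X, ropt G X -> exists2 Y, ropt H Y & r X Y
    & forall Y, ropt H Y -> exists2 X, ropt G X & r X Y].

Lemma gisoE G H : giso G H <-> opt_corr giso G H.
Proof.
case: G => nl L nr R; case: H => ml L' mr R' /=; split.
- case=> h1 h2 h3 h4; split.
  + by move=> _ [i <-]; case: (h1 i) => j; exists (L' j) => //; exists j.
  + by move=> _ [j <-]; case: (h2 j) => i; exists (L i) => //; exists i.
  + by move=> _ [i <-]; case: (h3 i) => j; exists (R' j) => //; exists j.
  + by move=> _ [j <-]; case: (h4 j) => i; exists (R i) => //; exists i.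
- case=> h1 h2 h3 h4; split.
  + by move=> i; case: (h1 (L i)) => [|_ [j <-]]; [exists i | exists j].
  + by move=> j; case: (h2 (L' j)) => [|_ [i <-]]; [exists j | exists i].
  + by move=> i; case: (h3 (R i)) => [|_ [j <-]]; [exists i | exists j].
  + by move=> j; case: (h4 (R' j)) => [|_ [i <-]]; [exists j | exists i].
Qed.

Lemma giso_refl G : giso G G.
Proof. by elim/game_opt_ind: G => G IHL IHR; apply/gisoE; split=> X hX; exists X; auto. Qed.

Lemma giso_sym G H : giso G H -> giso H G.
Proof.
elim/game_opt_ind: G H => G IHL IHR H /gisoE [h1 h2 h3 h4]; apply/gisoE; split.
- by move=> Y /h2 [X hX hXY]; exists X; auto.
- by move=> X /[dup] hX /h1 [Y hY hXY]; exists Y; auto.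
- by move=> Y /h4 [X hX hXY]; exists X; auto.
- by move=> X /[dup] hX /h3 [Y hY hXY]; exists Y; auto.
Qed.

Lemma giso_trans G H K : giso G H -> giso H K -> giso G K.
Proof.
elim/game_opt_ind: G H K => G IHL IHR H K /gisoE [h1 h2 h3 h4] /gisoE [k1 k2 k3 k4].
apply/gisoE; split.
- by move=> X /[dup] hX /h1 [Y /k1 [Z hZ hYZ] hXY]; exists Z; last exact: IHL hXY hYZ.
- by move=> Z /k2 [Y /h2 [X hX hXY] hYZ]; exists X; last exact: IHL hXY hYZ.
- by move=> X /[dup] hX /h3 [Y /k3 [Z hZ hYZ] hXY]; exists Z; last exact: IHR hXY hYZ.
- by move=> Z /k4 [Y /h4 [X hX hXY] hYZ]; exists X; last exact: IHR hXY hYZ.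
Qed.

Lemma giso_outcome G H : giso G H -> (lfw G <-> lfw H) /\ (rfw G <-> rfw H).
Proof.
elim/game_opt_ind: G H => G IHL IHR H /gisoE [h1 h2 h3 h4]; rewrite lfwE rfwE lfwE rfwE.
split; split.
- by case=> X [/[dup] hX /h1 [Y hY hXY] nX]; exists Y; rewrite -(IHL X hX Y hXY).2.
- by case=> Y [/h2 [X hX hXY] nY]; exists X; rewrite (IHL X hX Y hXY).2.
- by case=> X [/[dup] hX /h3 [Y hY hXY] nX]; exists Y; rewrite -(IHR X hX Y hXY).1.
- by case=> Y [/h4 [X hX hXY] nY]; exists X; rewrite (IHR X hX Y hXY).1.
Qed.

Lemma gadd_iso G G' H H' : giso G G' -> giso H H' -> giso (gadd G H) (gadd G' H').
Proof.
elim/game_opt_ind: G G' H H' => G IGL IGR G' H.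
elim/game_opt_ind: H => H IHL IHR H' /[dup] hG /gisoE [g1 g2 g3 g4] /[dup] hH /gisoE [k1 k2 k3 k4].
apply/gisoE; split.
- move=> _ /lopt_gadd [[A [/[dup] hA /g1 [B hB' hAB] ->]]|[A [/[dup] hA /k1 [B hB' hAB] ->]]].
  + by exists (gadd B H'); [exact: lopt_gaddl | apply: IGL].
  + by exists (gadd G' B); [exact: lopt_gaddr | apply: IHL].
- move=> _ /lopt_gadd [[B [/[dup] hB /g2 [A hA' hAB] ->]]|[B [/[dup] hB /k2 [A hA' hAB] ->]]].
  + by exists (gadd A H); [exact: lopt_gaddl | apply: IGL].
  + by exists (gadd G A); [exact: lopt_gaddr | apply: IHL].
- move=> _ /ropt_gadd [[A [/[dup] hA /g3 [B hB' hAB] ->]]|[A [/[dup] hA /k3 [B hB' hAB] ->]]].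
  + by exists (gadd B H'); [exact: ropt_gaddl | apply: IGR].
  + by exists (gadd G' B); [exact: ropt_gaddr | apply: IHR].
- move=> _ /ropt_gadd [[B [/[dup] hB /g4 [A hA' hAB] ->]]|[B [/[dup] hB /k4 [A hA' hAB] ->]]].
  + by exists (gadd A H); [exact: ropt_gaddl | apply: IGR].
  + by exists (gadd G A); [exact: ropt_gaddr | apply: IHR].
Qed.

Lemma gneg_iso G H : giso G H -> giso (gneg G) (gneg H).
Proof.
elim/game_opt_ind: G H => G IHL IHR H /gisoE [g1 g2 g3 g4]; apply/gisoE; split.
- move=> _ /lopt_gneg [A [/[dup] hA /g3 [B hB hAB] ->]].
  by exists (gneg B); [exact: lopt_gnegE | apply: IHR].
- move=> _ /lopt_gneg [B [/[dup] hB /g4 [A hA hAB] ->]].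
  by exists (gneg A); [exact: lopt_gnegE | apply: IHR].
- move=> _ /ropt_gneg [A [/[dup] hA /g1 [B hB hAB] ->]].
  by exists (gneg B); [exact: ropt_gnegE | apply: IHL].
- move=> _ /ropt_gneg [B [/[dup] hB /g2 [A hA hAB] ->]].
  by exists (gneg A); [exact: ropt_gnegE | apply: IHL].
Qed.

Lemma gaddC_iso G H : giso (gadd G H) (gadd H G).
Proof.
elim/game_opt_ind: G H => G IGL IGR H; elim/game_opt_ind: H => H IHL IHR.
apply/gisoE; split.
- move=> _ /lopt_gadd [[A [hA ->]]|[A [hA ->]]].
  + by exists (gadd H A); [exact: lopt_gaddr | exact: IGL].
  + by exists (gadd A G); [exact: lopt_gaddl | exact: IHL].
- move=> _ /lopt_gadd [[A [hA ->]]|[A [hA ->]]].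
  + by exists (gadd G A); [exact: lopt_gaddr | exact: IHL].
  + by exists (gadd A H); [exact: lopt_gaddl | exact: IGL].
- move=> _ /ropt_gadd [[A [hA ->]]|[A [hA ->]]].
  + by exists (gadd H A); [exact: ropt_gaddr | exact: IGR].
  + by exists (gadd A G); [exact: ropt_gaddl | exact: IHR].
- move=> _ /ropt_gadd [[A [hA ->]]|[A [hA ->]]].
  + by exists (gadd G A); [exact: ropt_gaddr | exact: IHR].
  + by exists (gadd A H); [exact: ropt_gaddl | exact: IGR].
Qed.

Lemma gaddA_iso G H K : giso (gadd (gadd G H) K) (gadd G (gadd H K)).
Proof.
elim/game_opt_ind: G H K => G IGL IGR H; elim/game_opt_ind: H => H IHL IHR K.
elim/game_opt_ind: K => K IKL IKR; apply/gisoE; split.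
- move=> _ /lopt_gadd [[_ [/lopt_gadd [[B [hB ->]]|[B [hB ->]]] ->]]|[A [hA ->]]].
  + by exists (gadd B (gadd H K)); [exact: lopt_gaddl | exact: IGL].
  + by exists (gadd G (gadd B K)); [apply: lopt_gaddr; exact: lopt_gaddl | exact: IHL].
  + by exists (gadd G (gadd H A)); [do 2 apply: lopt_gaddr | exact: IKL].
- move=> _ /lopt_gadd [[A [hA ->]]|[_ [/lopt_gadd [[B [hB ->]]|[B [hB ->]]] ->]]].
  + by exists (gadd (gadd A H) K); [do 2 apply: lopt_gaddl | exact: IGL].
  + by exists (gadd (gadd G B) K); [apply: lopt_gaddl; exact: lopt_gaddr | exact: IHL].
  + by exists (gadd (gadd G H) B); [exact: lopt_gaddr | exact: IKL].
- move=> _ /ropt_gadd [[_ [/ropt_gadd [[B [hB ->]]|[B [hB ->]]] ->]]|[A [hA ->]]].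
  + by exists (gadd B (gadd H K)); [exact: ropt_gaddl | exact: IGR].
  + by exists (gadd G (gadd B K)); [apply: ropt_gaddr; exact: ropt_gaddl | exact: IHR].
  + by exists (gadd G (gadd H A)); [do 2 apply: ropt_gaddr | exact: IKR].
- move=> _ /ropt_gadd [[A [hA ->]]|[_ [/ropt_gadd [[B [hB ->]]|[B [hB ->]]] ->]]].
  + by exists (gadd (gadd A H) K); [do 2 apply: ropt_gaddl | exact: IGR].
  + by exists (gadd (gadd G B) K); [apply: ropt_gaddl; exact: ropt_gaddr | exact: IHR].
  + by exists (gadd (gadd G H) B); [exact: ropt_gaddr | exact: IKR].
Qed.

Lemma gnegD_iso G H : giso (gneg (gadd G H)) (gadd (gneg G) (gneg H)).
Proof.
elim/game_opt_ind: G H => G IGL IGR H; elim/game_opt_ind: H => H IHL IHR.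
apply/gisoE; split.
- move=> _ /lopt_gneg [_ [/ropt_gadd [[A [hA ->]]|[A [hA ->]]] ->]].
  + by exists (gadd (gneg A) (gneg H)); [apply: lopt_gaddl; exact: lopt_gnegE | exact: IGR].
  + by exists (gadd (gneg G) (gneg A)); [apply: lopt_gaddr; exact: lopt_gnegE | exact: IHR].
- move=> _ /lopt_gadd [[_ [/lopt_gneg [A [hA ->]] ->]]|[_ [/lopt_gneg [A [hA ->]] ->]]].
  + by exists (gneg (gadd A H)); [apply: lopt_gnegE; exact: ropt_gaddl | exact: IGR].
  + by exists (gneg (gadd G A)); [apply: lopt_gnegE; exact: ropt_gaddr | exact: IHR].
- move=> _ /ropt_gneg [_ [/lopt_gadd [[A [hA ->]]|[A [hA ->]]] ->]].
  + by exists (gadd (gneg A) (gneg H)); [apply: ropt_gaddl; exact: ropt_gnegE | exact: IGL].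
  + by exists (gadd (gneg G) (gneg A)); [apply: ropt_gaddr; exact: ropt_gnegE | exact: IHL].
- move=> _ /ropt_gadd [[_ [/ropt_gneg [A [hA ->]] ->]]|[_ [/ropt_gneg [A [hA ->]] ->]]].
  + by exists (gneg (gadd A H)); [apply: ropt_gnegE; exact: lopt_gaddl | exact: IGL].
  + by exists (gneg (gadd G A)); [apply: ropt_gnegE; exact: lopt_gaddr | exact: IHL].
Qed.

Lemma gnegK_iso G : giso (gneg (gneg G)) G.
Proof.
elim/game_opt_ind: G => G IHL IHR; apply/gisoE; split.
- by move=> _ /lopt_gneg [_ [/ropt_gneg [A [hA ->]] ->]]; exists A; auto.
- by move=> A hA; exists (gneg (gneg A)); [apply: lopt_gnegE; exact: ropt_gnegE | auto].
- by move=> _ /ropt_gneg [_ [/lopt_gneg [A [hA ->]] ->]]; exists A; auto.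
- by move=> A hA; exists (gneg (gneg A)); [apply: ropt_gnegE; exact: lopt_gnegE | auto].
Qed.

Lemma gaddg0_iso G : giso (gadd G g0) G.
Proof.
elim/game_opt_ind: G => G IHL IHR; apply/gisoE; split.
- by move=> _ /lopt_gadd [[A [hA ->]]|[A [/lopt_g0]]] //; exists A; auto.
- by move=> A hA; exists (gadd A g0); [exact: lopt_gaddl | auto].
- by move=> _ /ropt_gadd [[A [hA ->]]|[A [/ropt_g0]]] //; exists A; auto.
- by move=> A hA; exists (gadd A g0); [exact: ropt_gaddl | auto].
Qed.

Lemma gneg0_iso : giso (gneg g0) g0.
Proof.
apply/gisoE; split; move=> X.
- by case/lopt_gneg=> Y [/ropt_g0].
- by move/lopt_g0.
- by case/ropt_gneg=> Y [/lopt_g0].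
- by move/ropt_g0.
Qed.

Definition ge0 (G : game) : Prop := ~ rfw G.
Definition le0 (G : game) : Prop := ~ lfw G.

Lemma giso_ge0 G H : giso G H -> ge0 G -> ge0 H.
Proof. by move=> /giso_outcome [_ e]; rewrite /ge0 e. Qed.

Lemma giso_lfw G H : giso G H -> lfw G -> lfw H.
Proof. by move=> /giso_outcome [e _]; rewrite e. Qed.

Lemma ge0E G : ge0 G <-> forall Z, ropt G Z -> lfw Z.
Proof.
rewrite /ge0 rfwE; split; last by move=> h [Z [hZ []]]; apply: h.
by move=> h Z hZ; apply: NNPP => hn; apply: h; exists Z.
Qed.

Lemma ge0_lfw_gadd G H :
  [/\ ge0 G -> ge0 H -> ge0 (gadd G H),
      lfw G -> ge0 H -> lfw (gadd G H)
    & ge0 G -> lfw H -> lfw (gadd G H)].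
Proof.
elim/game_opt_ind: G H => G IGL IGR H; elim/game_opt_ind: H => H IHL IHR; split.
- move=> /ge0E hG /ge0E hH; apply/ge0E => _ /ropt_gadd [[A [hA ->]]|[A [hA ->]]].
  + by case: (IGR A hA H) => _ h _; apply: h; [exact: hG | exact/ge0E].
  + by case: (IHR A hA) => _ _ h; apply: h; [exact/ge0E | exact: hH].
- case/lfwE=> A [hA nA] hH; apply/lfwE; exists (gadd A H); split; first exact: lopt_gaddl.
  by case: (IGL A hA H) => h _ _; apply: h.
- move=> hG /lfwE [A [hA nA]]; apply/lfwE; exists (gadd G A); split; first exact: lopt_gaddr.
  by case: (IHL A hA) => h _ _; apply: h.
Qed.

Lemma ge0_gadd G H : ge0 G -> ge0 H -> ge0 (gadd G H).
Proof. by case: (ge0_lfw_gadd G H). Qed.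

Lemma rfw_gadd_le0 G H : rfw G -> le0 H -> rfw (gadd G H).
Proof.
move=> hG hH; apply/lfw_gneg; apply: giso_lfw (giso_sym (gnegD_iso G H)) _.
case: (ge0_lfw_gadd (gneg G) (gneg H)) => _ h _.
by apply: h; [exact/lfw_gneg | rewrite /ge0 rfw_gneg].
Qed.

Lemma gsubgg_ge0_le0 G : ge0 (gadd G (gneg G)) /\ le0 (gadd G (gneg G)).
Proof.
elim/game_opt_ind: G => G IL IR; split.
- apply/ge0E => _ /ropt_gadd [[A [hA ->]]|[_ [/ropt_gneg [A [hA ->]] ->]]].
  + apply/lfwE; exists (gadd A (gneg A)); split; last exact: (IR A hA).1.
    by apply: lopt_gaddr; exact: lopt_gnegE.
  + apply/lfwE; exists (gadd A (gneg A)); split; last exact: (IL A hA).1.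
    exact: lopt_gaddl.
- rewrite /le0 lfwE => -[_ [/lopt_gadd [[A [hA ->]]|[_ [/lopt_gneg [A [hA ->]] ->]]]]]; apply.
  + apply/rfwE; exists (gadd A (gneg A)); split; last exact: (IL A hA).2.
    by apply: ropt_gaddr; exact: ropt_gnegE.
  + apply/rfwE; exists (gadd A (gneg A)); split; last exact: (IR A hA).2.
    exact: ropt_gaddl.
Qed.

Definition gle (G H : game) : Prop := ge0 (gadd H (gneg G)).

Lemma giso_gle G G' H H' : giso G G' -> giso H H' -> gle G H -> gle G' H'.
Proof. by move=> hG hH; apply: giso_ge0; apply: gadd_iso hH (gneg_iso hG). Qed.

Lemma gnegB_iso A B : giso (gneg (gadd A (gneg B))) (gadd B (gneg A)).
Proof.
apply: giso_trans (gnegD_iso _ _) _; apply: giso_trans (gaddC_iso _ _) _.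
exact: gadd_iso (gnegK_iso B) (giso_refl _).
Qed.

Lemma lfw_gsub A B : lfw (gadd A (gneg B)) <-> ~ gle A B.
Proof.
rewrite -rfw_gneg; have [_ ->] := giso_outcome (gnegB_iso A B).
by split => [h /(_ h) | /NNPP].
Qed.

Lemma gleE G H :
  gle G H <-> (forall X, lopt G X -> ~ gle H X) /\ (forall Y, ropt H Y -> ~ gle Y G).
Proof.
rewrite /gle ge0E; split.
- move=> h; split => [X hX | Y hY]; apply/lfw_gsub/h.
  + by apply: ropt_gaddr; exact: ropt_gnegE.
  + exact: ropt_gaddl.
- case=> h1 h2 _ /ropt_gadd [[Y [hY ->]]|[_ [/ropt_gneg [X [hX ->]] ->]]].
  + exact/lfw_gsub/h2.
  + exact/lfw_gsub/h1.
Qed.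

Lemma gle_refl G : gle G G.
Proof. exact: (gsubgg_ge0_le0 G).1. Qed.
#[local] Hint Resolve gle_refl : core.

Lemma gadd_medial_iso A B C D :
  giso (gadd (gadd A B) (gadd C D)) (gadd (gadd A C) (gadd B D)).
Proof.
apply: giso_trans (gaddA_iso _ _ _) _; apply: giso_trans _ (giso_sym (gaddA_iso _ _ _)).
apply: gadd_iso (giso_refl _) _.
apply: giso_trans (giso_sym (gaddA_iso _ _ _)) _; apply: giso_trans _ (gaddA_iso _ _ _).
exact: gadd_iso (gaddC_iso _ _) (giso_refl _).
Qed.

Lemma gle_trans G H K : gle G H -> gle H K -> gle G K.
Proof.
move=> hGH hHK; apply: NNPP => hGK.
have hsum : ge0 (gadd (gadd K (gneg G)) (gadd H (gneg H))).
  apply: giso_ge0 _ (ge0_gadd hHK hGH).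
  apply: giso_trans (gadd_medial_iso _ _ _ _) _.
  apply: giso_trans _ (giso_sym (gadd_medial_iso _ _ _ _)).
  exact: gadd_iso (giso_refl _) (gaddC_iso _ _).
by apply/hsum/rfw_gadd_le0; [exact: NNPP | exact: (gsubgg_ge0_le0 H).2].
Qed.

Lemma gle_addr G G' H : gle G G' -> gle (gadd G H) (gadd G' H).
Proof.
move=> h; rewrite /gle; apply: giso_ge0 _ (ge0_gadd h (@gle_refl H)).
apply: giso_trans (gadd_medial_iso _ _ _ _) _.
exact: gadd_iso (giso_refl _) (giso_sym (gnegD_iso _ _)).
Qed.

Lemma gle_addl G H H' : gle H H' -> gle (gadd G H) (gadd G H').
Proof. by move=> h; apply: giso_gle (gaddC_iso _ _) (gaddC_iso _ _) (gle_addr h). Qed.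

Definition gequiv (G H : game) : Prop := gle G H /\ gle H G.

#[local] Instance gequiv_equiv : Equivalence gequiv.
Proof.
split; first by [].
- by move=> G H [].
- by move=> G H K [a b] [c d]; split; [apply: gle_trans a c | apply: gle_trans d b].
Qed.

#[local] Instance gle_proper : Proper (gequiv ==> gequiv ==> iff) gle.
Proof.
move=> G G' [a b] H H' [c d]; split => h.
- exact: gle_trans b (gle_trans h c).
- exact: gle_trans a (gle_trans h d).
Qed.

#[local] Instance gadd_proper : Proper (gequiv ==> gequiv ==> gequiv) gadd.
Proof.
move=> G G' [a b] H H' [c d]; split.
- exact: gle_trans (gle_addr a) (gle_addl c).
- exact: gle_trans (gle_addr b) (gle_addl d).
Qed.

Lemma giso_gequiv G H : giso G H -> gequiv G H.
Proof.
by move=> h; split; [apply: giso_gle (giso_refl G) h _ | apply: giso_gle h (giso_refl G) _].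
Qed.

Lemma game_eqE G H : game_eq G H <-> gequiv G H.
Proof.
rewrite /game_eq /second_player_win -/(ge0 _) -/(gle H G) -/(le0 _) /le0 lfw_gsub.
by split=> -[h1 h2]; split=> //; exact: NNPP.
Qed.

Lemma gaddg0 G : gequiv (gadd G g0) G. Proof. exact/giso_gequiv/gaddg0_iso. Qed.
Lemma gaddC G H : gequiv (gadd G H) (gadd H G). Proof. exact/giso_gequiv/gaddC_iso. Qed.
Lemma gadd0g G : gequiv (gadd g0 G) G. Proof. by rewrite gaddC gaddg0. Qed.
Lemma gaddA G H K : gequiv (gadd (gadd G H) K) (gadd G (gadd H K)).
Proof. exact/giso_gequiv/gaddA_iso. Qed.

Lemma gsubgg G : gequiv (gadd G (gneg G)) g0.
Proof.
have hG := (gsubgg_ge0_le0 G).1; split; rewrite /gle.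
- apply: giso_ge0 _ hG; apply: giso_trans (giso_sym (gnegB_iso G G)) _.
  exact: giso_trans (giso_sym (gaddg0_iso _)) (gaddC_iso _ _).
- apply: giso_ge0 _ hG; apply: giso_trans (giso_sym (gaddg0_iso _)) _.
  exact: gadd_iso (giso_refl _) (giso_sym gneg0_iso).
Qed.

Lemma gle_add2l X A B : gle (gadd X A) (gadd X B) <-> gle A B.
Proof.
split; last exact: gle_addl.
by move=> /(gle_addl (G := gneg X)); rewrite -!gaddA (gaddC (gneg X)) gsubgg !gadd0g.
Qed.

Lemma gle0_gadd G H : gle g0 G -> gle g0 H -> gle g0 (gadd G H).
Proof. by move=> hG hH; rewrite -(gaddg0 g0); apply: gle_trans (gle_addr hG) (gle_addl hH). Qed.

Lemma gle_gaddl G H : gle g0 G -> gle H (gadd G H).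
Proof. by move=> hG; rewrite -{1}(gadd0g H); apply: gle_addr. Qed.

Lemma lopt_not_gle G X : lopt G X -> ~ gle G X.
Proof. by move=> hX /gleE [h _]; apply: (h _ hX). Qed.

Lemma ropt_not_gle G Y : ropt G Y -> ~ gle Y G.
Proof. by move=> hY /gleE [_ h]; apply: (h _ hY). Qed.

Lemma lopt_gle_contra G X Y : lopt G Y -> gle X Y -> ~ gle G X.
Proof. by move=> hY hXY hGX; apply: lopt_not_gle hY (gle_trans hGX hXY). Qed.

Lemma ropt_gle_contra G X Y : ropt G Y -> gle Y X -> ~ gle X G.
Proof. by move=> hY hYX hXG; apply: ropt_not_gle hY (gle_trans hYX hXG). Qed.

Lemma lopt_single A B X : lopt (Game (fun _ : 'I_1 => A) (fun _ : 'I_1 => B)) X <-> X = A.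
Proof. by split; [case=> i <- | move=> ->; exists ord0]. Qed.

Lemma ropt_single A B X : ropt (Game (fun _ : 'I_1 => A) (fun _ : 'I_1 => B)) X <-> X = B.
Proof. by split; [case=> i <- | move=> ->; exists ord0]. Qed.

Lemma lopt_gadd_gstar G : lopt (gadd G gstar) (gadd G g0).
Proof. exact/lopt_gaddr/lopt_single. Qed.

Lemma ropt_gadd_gstar G : ropt (gadd G gstar) (gadd G g0).
Proof. exact/ropt_gaddr/ropt_single. Qed.

Lemma gstar_gstar : gequiv (gadd gstar gstar) g0.
Proof.
have hneg : giso (gneg gstar) gstar.
  apply/gisoE; split=> X.
  - by case/lopt_gneg=> _ [/ropt_single -> ->]; exists g0; [exact/lopt_single | exact: gneg0_iso].
  - by move/lopt_single->; exists (gneg g0); [exact/lopt_gnegE/ropt_single | exact: gneg0_iso].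
  - by case/ropt_gneg=> _ [/lopt_single -> ->]; exists g0; [exact/ropt_single | exact: gneg0_iso].
  - by move/ropt_single->; exists (gneg g0); [exact/ropt_gnegE/lopt_single | exact: gneg0_iso].
by rewrite -{2}(giso_gequiv hneg) gsubgg.
Qed.

Lemma gstarK X : gequiv (gadd gstar (gadd gstar X)) X.
Proof. by rewrite -gaddA gstar_gstar gadd0g. Qed.

Lemma gle0_up : gle g0 gup.
Proof.
apply/gleE; split=> [X /lopt_g0 // | Y /ropt_single ->].
exact/lopt_not_gle/lopt_single.
Qed.

Lemma not_gle_up0 : ~ gle gup g0. Proof. exact/lopt_not_gle/lopt_single. Qed.
Lemma not_gle0_star : ~ gle g0 gstar. Proof. exact/ropt_not_gle/ropt_single. Qed.

Lemma not_gle0_upstar : ~ gle g0 (gadd gup gstar).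
Proof.
apply: (ropt_gle_contra (Y := gadd gstar gstar)); last by rewrite gstar_gstar.
exact/ropt_gaddl/ropt_single.
Qed.

Lemma gle_self_gadd X G : gle X (gadd X G) <-> gle g0 G.
Proof. by rewrite -{1}(gaddg0 X) gle_add2l. Qed.

Lemma gle_gadd_self X G : gle (gadd X G) X <-> gle G g0.
Proof. by rewrite -{2}(gaddg0 X) gle_add2l. Qed.

Fixpoint up_tower (k : nat) : game :=
  if k is k'.+1 then Game (fun _ : 'I_1 => g0) (fun _ : 'I_1 => up_tower k') else g0.

Lemma lopt_up_tower k X : lopt (up_tower k) X -> X = g0.
Proof. by case: k => [/lopt_g0 | k /lopt_single]. Qed.

Lemma up_tower_not_le0 k : ~ gle (up_tower k.+1) g0.
Proof. exact/lopt_not_gle/lopt_single. Qed.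

Lemma up_tower_mono j :
  (forall d, gle (up_tower j) (up_tower (j + d.+2))) /\
  (forall e, ~ gle (up_tower (j + e.+1)) (up_tower j)).
Proof.
elim: j => [|j [IHle IHnle]].
  split=> [d | e]; last exact: up_tower_not_le0.
  by apply/gleE; split=> [X /lopt_g0 // | Y /ropt_single ->]; apply: up_tower_not_le0.
have hnle e : ~ gle (up_tower (j.+1 + e.+1)) (up_tower j.+1).
  apply: (ropt_gle_contra (Y := up_tower j)); first exact/ropt_single.
  by rewrite addSn -addnS; apply: IHle.
split=> // d; apply/gleE; split.
- by move=> X /lopt_single ->; rewrite addSn; apply: up_tower_not_le0.
- by move=> Y; rewrite addnS => /ropt_single ->; apply: hnle.
Qed.

Lemma up_tower_ge0 k : gle g0 (up_tower k.+2).
Proof. exact: (up_tower_mono 0).1. Qed.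

Lemma up_tower_not_le j e : ~ gle (up_tower (j + e.+1)) (up_tower j).
Proof. exact: (up_tower_mono j).2. Qed.

Lemma not_up_tower_le_star k : ~ gle (up_tower k.+2) gstar.
Proof. by apply: (ropt_gle_contra (Y := g0)); [exact/ropt_single | exact: up_tower_ge0]. Qed.

Lemma gstar_up_tower_le j m : j <= m.+1 ->
  ~ gle (up_tower m.+1) (gadd gstar (up_tower j)) ->
  gle (gadd gstar (up_tower j)) (up_tower m.+2).
Proof.
move=> hj hnle; apply/gleE; split=> [X | _ /ropt_single -> //].
case/lopt_gadd=> [[_ [/lopt_single -> ->]] | [_ [/lopt_up_tower -> ->]]].
- by rewrite gadd0g; have := up_tower_not_le (j := j) (e := m.+1 - j); rewrite addnS subnKC.
- by rewrite gaddg0; apply: not_up_tower_le_star.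
Qed.

Lemma not_up_tower_le_up j m : j <= m.+1 ->
  ~ gle (up_tower m.+1) (gadd gstar (up_tower j)) ->
  ~ gle (up_tower m.+2) (gadd gup (up_tower j)).
Proof.
move=> hj hnle; apply: (ropt_gle_contra (Y := gadd gstar (up_tower j))).
  exact/ropt_gaddl/ropt_single.
exact: gstar_up_tower_le.
Qed.

Section UpTowerStep.
Variable k : nat.
Hypothesis IH : gequiv (up_tower k.+2) (gadd gup (gadd gstar (up_tower k.+1))).

Lemma up_tower_step_le :
  gle (up_tower k.+3) (gadd gup (gadd gstar (up_tower k.+2))).
Proof.
apply/gleE; split=> [_ /lopt_single -> | Y hY].
  apply: (lopt_gle_contra (Y := gadd gup (gadd g0 (up_tower k.+2)))).
    exact/lopt_gaddr/lopt_gaddl/lopt_single.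
  by rewrite gadd0g; exact: (gle0_gadd gle0_up (up_tower_ge0 (k := k))).
apply: (ropt_gle_contra (Y := up_tower k.+2)); first exact/ropt_single.
case/ropt_gadd: hY => [[_ [/ropt_single -> ->]] | [Y' [hY ->]]]; first by rewrite gstarK.
case/ropt_gadd: hY => [[_ [/ropt_single -> ->]] | [_ [/ropt_single -> ->]]].
- by rewrite gadd0g; apply: gle_gaddl gle0_up.
- by rewrite -IH.
Qed.

Lemma up_tower_step_ge :
  gle (gadd gup (gadd gstar (up_tower k.+2))) (up_tower k.+3).
Proof.
apply/gleE; split=> [X hX | _ /ropt_single ->]; last first.
  by rewrite -gaddA (gaddC (gadd gup gstar)) gle_self_gadd; apply: not_gle0_upstar.
case/lopt_gadd: hX => [[_ [/lopt_single -> ->]] | [X' [hX ->]]].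
  rewrite gadd0g IH -gaddA (gaddC gstar gup) gaddA gstarK.
  apply: not_up_tower_le_up => //.
  by rewrite IH gaddC gle_gadd_self; apply: not_gle_up0.
case/lopt_gadd: hX => [[_ [/lopt_single -> ->]] | [_ [/lopt_up_tower -> ->]]].
- rewrite gadd0g; apply: not_up_tower_le_up => //.
  by rewrite (gaddC gstar) gle_self_gadd; apply: not_gle0_star.
- apply: (ropt_gle_contra (Y := gadd gstar (gadd gstar g0))).
    exact/ropt_gaddl/ropt_single.
  by rewrite gstarK; apply: up_tower_ge0.
Qed.

End UpTowerStep.

Lemma up_tower_succ k : gequiv (up_tower k.+2) (gadd gup (gadd gstar (up_tower k.+1))).
Proof.
elim: k => [|k IH]; last by split; [apply: up_tower_step_le | apply: up_tower_step_ge].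
by rewrite [up_tower 1]/= gstar_gstar gaddg0.
Qed.

Lemma mul_upS m : mul_up m.+1 = gadd gup (mul_up m). Proof. by []. Qed.

Lemma mul_up_tower m :
  (odd m -> gequiv (mul_up m) (up_tower m.+1)) /\
  (~~ odd m -> gequiv (gadd (mul_up m) gstar) (up_tower m.+1)).
Proof.
elim: m => [|m [IHodd IHeven]]; first by split=> // _; rewrite gadd0g.
split=> hm; rewrite mul_upS up_tower_succ.
- by rewrite -IHeven ?(gaddC (mul_up m)) ?gstarK //; move: hm; rewrite /=.
- by rewrite -IHodd ?gaddA ?(gaddC (mul_up m)) //; move: hm; rewrite /= negbK.
Qed.

Lemma up_tower_mul_up n : 0 < n ->
  (~~ odd n -> gequiv (up_tower n) (mul_up n.-1)) /\
  (odd n -> gequiv (up_tower n) (gadd (mul_up n.-1) gstar)).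
Proof.
case: n => // m _; have [hodd heven] := mul_up_tower m.
by split=> /= hm; symmetry; [rewrite negbK in hm; apply: hodd | apply: heven].
Qed.

Definition mkgame (sL sR : seq game) : game :=
  Game (fun i : 'I_(size sL) => nth g0 sL i) (fun j : 'I_(size sR) => nth g0 sR j).

Lemma exists_nth_In (s : seq game) X :
  (exists i : 'I_(size s), nth g0 s i = X) <-> List.In X s.
Proof.
split.
- case=> [[i hi] <-] /=; elim: s i hi => [|x s IH] [|i] //= hi.
  + by left.
  + by right; apply: IH.
- elim: s => [|x s IH] //= [-> | /IH [[i hi] <-]].
  + by exists (Ordinal (ltn0Sn (size s))).
  + by exists (Ordinal (hi : i.+1 < (size s).+1)).
Qed.

Lemma lopt_mkgame sL sR X : lopt (mkgame sL sR) X <-> List.In X sL.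
Proof. exact: exists_nth_In. Qed.

Lemma ropt_mkgame sL sR X : ropt (mkgame sL sR) X <-> List.In X sR.
Proof. exact: exists_nth_In. Qed.

(* The game on a star with A-coloured centre, from a position where nothing has
   been played or the centre is dominated, with [a], [b], [c] undominated leaves
   of colour A, B, C; Left's option [g0] is playing the centre. *)
Fixpoint star_game (a : nat) : nat -> nat -> game :=
  fix star_game_b b := fix star_game_c c :=
    let optA := if a is a'.+1 then [:: star_game a' b c] else [::] in
    let optB := if b is b'.+1 then [:: star_game_b b' c] else [::] in
    let optC := if c is c'.+1 then [:: star_game_c c'] else [::] in
    if a + b + c == 0 then g0 else mkgame (g0 :: optA ++ optC) (optB ++ optC).

Arguments star_game : simpl never.

Lemma star_gameE a b c : star_game a b c =
  if a + b + c == 0 then g0 else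
  mkgame (g0 :: (if a is a'.+1 then [:: star_game a' b c] else [::]) ++
                (if c is c'.+1 then [:: star_game a b c'] else [::]))
         ((if b is b'.+1 then [:: star_game a b' c] else [::]) ++
          (if c is c'.+1 then [:: star_game a b c'] else [::])).
Proof. by case: a => [|a]; case: b => [|b]; case: c. Qed.

Lemma In_if_succ (n : nat) (f : nat -> game) X :
  List.In X (if n is n'.+1 then [:: f n'] else [::]) <-> 0 < n /\ X = f n.-1.
Proof.
case: n => [|n] /=; first by split=> -[].
by split=> [[<- | []] | [_ ->]]; [| left].
Qed.

Lemma star_game_eq0 a b c : a + b + c = 0 -> star_game a b c = g0.
Proof. by rewrite star_gameE => ->. Qed.

Lemma lopt_star_game a b c X : lopt (star_game a b c) X <->
  0 < a + b + c /\
  [\/ X = g0, 0 < a /\ X = star_game a.-1 b c | 0 < c /\ X = star_game a b c.-1].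
Proof.
have [habc | hpos] := posnP (a + b + c).
  by rewrite (star_game_eq0 habc); split=> [/lopt_g0 | []].
rewrite star_gameE (negbTE (lt0n_neq0 hpos)) lopt_mkgame /= List.in_app_iff.
rewrite (In_if_succ a (fun a' => star_game a' b c)) (In_if_succ c (star_game a b)).
by split=> [[<- | [hA | hC]] | [_ [-> | hA | hC]]]; firstorder.
Qed.

Lemma ropt_star_game a b c X : ropt (star_game a b c) X <->
  (0 < b /\ X = star_game a b.-1 c) \/ (0 < c /\ X = star_game a b c.-1).
Proof.
have [habc | hpos] := posnP (a + b + c).
  by rewrite (star_game_eq0 habc); split=> [/ropt_g0 | ]; lia.
rewrite star_gameE (negbTE (lt0n_neq0 hpos)) ropt_mkgame /= List.in_app_iff.
by rewrite (In_if_succ b (fun b' => star_game a b' c)) (In_if_succ c (star_game a b)).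
Qed.

Lemma lopt_star_game0 a b c : 0 < a + b + c -> lopt (star_game a b c) g0.
Proof. by move=> h; apply/lopt_star_game; split => //; constructor 1. Qed.

Lemma lopt_star_gameA a b c : 0 < a -> lopt (star_game a b c) (star_game a.-1 b c).
Proof. by move=> h; apply/lopt_star_game; split; [lia | constructor 2]. Qed.

Lemma lopt_star_gameC a b c : 0 < c -> lopt (star_game a b c) (star_game a b c.-1).
Proof. by move=> h; apply/lopt_star_game; split; [lia | constructor 3]. Qed.

Lemma ropt_star_gameB a b c : 0 < b -> ropt (star_game a b c) (star_game a b.-1 c).
Proof. by move=> h; apply/ropt_star_game; left. Qed.

Lemma ropt_star_gameC a b c : 0 < c -> ropt (star_game a b c) (star_game a b c.-1).
Proof. by move=> h; apply/ropt_star_game; right. Qed.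

Lemma star_game_not_le0 a b c : 0 < a + b + c -> ~ gle (star_game a b c) g0.
Proof. by move=> h; apply/lopt_not_gle/lopt_star_game0. Qed.

Lemma star_game_ge0 a b c : 0 < a -> gle g0 (star_game a b c).
Proof.
move=> ha; apply/gleE; split=> [X /lopt_g0 // | Y /ropt_star_game [] [_ ->]].
all: by apply: star_game_not_le0; lia.
Qed.

Lemma not_star_game_le_star a b c : 0 < a -> ~ gle (star_game a b c) gstar.
Proof.
by move=> ha; apply: (ropt_gle_contra (Y := g0)); [exact/ropt_single | exact: star_game_ge0].
Qed.

Lemma gstar_le_star_game a b c : 0 < a -> gle gstar (star_game a b c).
Proof.
move=> ha; apply/gleE; split=> [X /lopt_single -> | Y /ropt_star_game [] [_ ->]].
- by apply: star_game_not_le0; lia.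
- exact: not_star_game_le_star.
- exact: not_star_game_le_star.
Qed.

Lemma star_game0_lt a b c x y : 0 < a ->
  gle (star_game 0 x y) (star_game a b c) /\ ~ gle (star_game a b c) (star_game 0 x y).
Proof.
move=> ha; have [N hN] : exists N, x + y + b + c <= N by exists (x + y + b + c).
elim: N x y b c hN => [|N IH] x y b c hN.
  have [-> [-> [-> ->]]] : x = 0 /\ y = 0 /\ b = 0 /\ c = 0 by lia.
  rewrite [star_game 0 0 0]star_game_eq0 //; split; first exact: star_game_ge0.
  by apply: star_game_not_le0; lia.
split.
- apply/gleE; split=> [X /lopt_star_game [_ [-> | [] // | [hy ->]]] | Y].
    by apply: star_game_not_le0; lia.
  by case: y hy hN => // y _ hN; case: (IH x y b c ltac:(lia)).
  case/ropt_star_game=> -[h ->].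
  - by case: (IH x y b.-1 c ltac:(lia)).
  - by case: (IH x y b c.-1 ltac:(lia)).
- have [hxy | hxy] := posnP (x + y).
    have [-> ->] : x = 0 /\ y = 0 by lia.
    by rewrite [star_game 0 0 0]star_game_eq0 //; apply: star_game_not_le0; lia.
  have [hx | hx] := posnP x.
    have hy : 0 < y by lia.
    apply: (ropt_gle_contra (ropt_star_gameC _ _ hy)).
    by case: (IH x y.-1 b c ltac:(lia)).
  apply: (ropt_gle_contra (ropt_star_gameB _ _ hx)).
  by case: (IH x.-1 y b c ltac:(lia)).
Qed.

Lemma not_star_game_le_star0 a b c x y : 0 < a ->
  ~ gle (star_game a b c) (gadd (star_game 0 x y) gstar).
Proof.
move=> ha; apply: (ropt_gle_contra (ropt_gadd_gstar _)).
by rewrite gaddg0; apply: (star_game0_lt _ _ _ _ ha).1.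
Qed.

Lemma star_game0_star_le a b c x y : 0 < a ->
  gle (gadd (star_game 0 x y) gstar) (star_game a b c).
Proof.
move=> ha; apply/gleE; split=> [X | Y /ropt_star_game [] [_ ->]].
- case/lopt_gadd=> [[_ [/lopt_star_game [_ [-> | [] // | [_ ->]]] ->]] |
                   [_ [/lopt_single -> ->]]].
  + by rewrite gadd0g; apply: not_star_game_le_star.
  + exact: not_star_game_le_star0.
  + by rewrite gaddg0; apply: (star_game0_lt _ _ _ _ ha).2.
- exact: not_star_game_le_star0.
- exact: not_star_game_le_star0.
Qed.

Lemma star_game0_tower b c : gequiv (star_game 0 b c) (up_tower (b + c)).
Proof.
move hbc : (b + c) => n; elim: n b c hbc => [|n IH] b c hbc.
  by rewrite star_game_eq0.
have [Z hZ eqZ] : exists2 Z, ropt (star_game 0 b c) Z & gequiv Z (up_tower n).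
  have [hb | hb] := posnP b.
    exists (star_game 0 b c.-1); first by apply: ropt_star_gameC; lia.
    by apply: IH; lia.
  by exists (star_game 0 b.-1 c); [exact: ropt_star_gameB | apply: IH; lia].
split; apply/gleE; split.
- move=> X /lopt_star_game [_ [-> | [] // | [hc ->]]]; first exact: up_tower_not_le0.
  by rewrite (IH b c.-1) -?(addn1 n); [exact: up_tower_not_le | lia].
- by move=> _ /ropt_single ->; apply: (ropt_gle_contra hZ); rewrite eqZ.
- by move=> _ /lopt_single ->; apply: star_game_not_le0; lia.
- move=> Y /ropt_star_game [] [h ->].
  + by rewrite (IH b.-1 c); [exact/ropt_not_gle/ropt_single | lia].
  + by rewrite (IH b c.-1); [exact/ropt_not_gle/ropt_single | lia].
Qed.

Section StarGameParityStep.
Variables a b c : nat.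
Hypothesis ha : 0 < a.

Section OddStep.
Hypothesis eqc : gequiv (star_game a b c) (star_game a b 0).
Hypothesis eqa : 1 < a -> gequiv (star_game a.-1 b c.+1) (gadd (star_game a.-1 b 0) gstar).
Hypothesis eqb : 0 < b -> gequiv (star_game a b.-1 c.+1) (gadd (star_game a b.-1 0) gstar).

Lemma star_game_odd_step : gequiv (star_game a b c.+1) (gadd (star_game a b 0) gstar).
Proof.
split; apply/gleE; split.
- move=> X /lopt_star_game [_ [-> | [_ ->] | [_ ->]]].
  + by apply: (lopt_gle_contra (lopt_gadd_gstar _)); rewrite gaddg0; apply: star_game_ge0.
  + have [a1 | a2] : a = 1 \/ 1 < a by lia.
      subst a; apply: (lopt_gle_contra (lopt_gadd_gstar _)).
      by rewrite gaddg0; apply: (star_game0_lt _ _ _ _ ha).1.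
    by apply: (lopt_gle_contra (lopt_gaddl _ (lopt_star_gameA b 0 ha))); rewrite eqa.
  + by apply: (lopt_gle_contra (lopt_gadd_gstar _)); rewrite gaddg0 /= eqc.
- move=> Y /ropt_gadd [[_ [/ropt_star_game [[hb ->] | [] //] ->]] |
                       [_ [/ropt_single -> ->]]].
  + by apply: (ropt_gle_contra (ropt_star_gameB a c.+1 hb)); rewrite eqb.
  + by apply: (ropt_gle_contra (ropt_star_gameC a b (ltn0Sn c))); rewrite gaddg0 /= eqc.
- move=> X /lopt_gadd [[_ [/lopt_star_game [_ [-> | [_ ->] | [] //]] ->]] |
                       [_ [/lopt_single -> ->]]].
  + rewrite gadd0g; apply: (lopt_gle_contra (lopt_star_gameC a b (ltn0Sn c))).
    exact: gstar_le_star_game.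
  + have [a1 | a2] : a = 1 \/ 1 < a by lia.
      subst a; apply: (lopt_gle_contra (lopt_star_gameC 1 b (ltn0Sn c))).
      exact: star_game0_star_le.
    by apply: (lopt_gle_contra (lopt_star_gameA b c.+1 ha)); rewrite eqa.
  + rewrite gaddg0; apply: (lopt_gle_contra (lopt_star_gameC a b (ltn0Sn c))).
    by rewrite /= eqc.
- move=> Y /ropt_star_game [[hb ->] | [_ ->]].
  + by rewrite eqb //; apply/ropt_not_gle/ropt_gaddl/ropt_star_gameB.
  + by rewrite /= eqc; apply: (ropt_gle_contra (ropt_gadd_gstar _)); rewrite gaddg0.
Qed.
End OddStep.

Section EvenStep.
Hypothesis eqc : gequiv (star_game a b c) (gadd (star_game a b 0) gstar).
Hypothesis eqa : 1 < a -> gequiv (star_game a.-1 b c.+1) (star_game a.-1 b 0).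
Hypothesis eqb : 0 < b -> gequiv (star_game a b.-1 c.+1) (star_game a b.-1 0).

Lemma star_game_even_step : gequiv (star_game a b c.+1) (star_game a b 0).
Proof.
have ropt_g0 := ropt_gaddr (star_game a b 0) (proj2 (ropt_single g0 g0 g0) erefl).
split; apply/gleE; split.
- move=> X /lopt_star_game [_ [-> | [_ ->] | [_ ->]]].
  + by apply: (lopt_gle_contra (lopt_star_game0 _)) => //; lia.
  + have [a1 | a2] : a = 1 \/ 1 < a by lia.
      by subst a; apply: (star_game0_lt _ _ _ _ ha).2.
    by apply: (lopt_gle_contra (lopt_star_gameA b 0 ha)); rewrite eqa.
  + by rewrite /= eqc; apply: (ropt_gle_contra (ropt_gadd_gstar _)); rewrite gaddg0.
- move=> Y /ropt_star_game [[hb ->] | [] //].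
  by apply: (ropt_gle_contra (ropt_star_gameB a c.+1 hb)); rewrite eqb.
- move=> X /lopt_star_game [_ [-> | [_ ->] | [] //]].
  + by apply: (lopt_gle_contra (lopt_star_game0 _)) => //; lia.
  + have [a1 | a2] : a = 1 \/ 1 < a by lia.
      subst a; apply: (lopt_gle_contra (lopt_star_gameC 1 b (ltn0Sn c))).
      exact: (star_game0_lt _ _ _ _ ha).1.
    by apply: (lopt_gle_contra (lopt_star_gameA b c.+1 ha)); rewrite eqa.
- move=> Y /ropt_star_game [[hb ->] | [_ ->]].
  + by rewrite eqb //; apply/ropt_not_gle/ropt_star_gameB.
  + by rewrite /= eqc; apply: (lopt_gle_contra (lopt_gadd_gstar _)); rewrite gaddg0.
Qed.
End EvenStep.
End StarGameParityStep.

Lemma star_game_parity a b c : 0 < a ->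
  (odd c -> gequiv (star_game a b c) (gadd (star_game a b 0) gstar)) /\
  (~~ odd c -> gequiv (star_game a b c) (star_game a b 0)).
Proof.
move=> ha; have [N hN] : exists N, a + b + c <= N by exists (a + b + c).
elim: N a b c ha hN => [|N IH] a b c ha hN; first lia.
case: c hN => [|c] hN; first by split.
have [IHc_odd IHc_even] := IH a b c ha ltac:(lia).
have IHa (h : 1 < a) := IH a.-1 b c.+1 ltac:(lia) ltac:(lia).
have IHb (h : 0 < b) := IH a b.-1 c.+1 ha ltac:(lia).
rewrite /=; split=> hc.
- apply: star_game_odd_step => //; first exact: IHc_even.
  + by move=> h; apply: (IHa h).1.
  + by move=> h; apply: (IHb h).1.
- rewrite negbK in hc; apply: star_game_even_step => //; first exact: IHc_odd.
  + by move=> h; apply: (IHa h).2; rewrite /= hc.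
  + by move=> h; apply: (IHb h).2; rewrite /= hc.
Qed.

Lemma exists_tnth_in_tuple (T : eqType) (s : seq T) (f : T -> game) X :
  (exists i : 'I_(size s), f (tnth (in_tuple s) i) = X) <-> exists2 v, v \in s & X = f v.
Proof.
split; first by case=> i <-; exists (tnth (in_tuple s) i); first exact: mem_tnth.
case=> v hv ->; have hi : index v s < size s by rewrite index_mem.
by exists (Ordinal hi); rewrite (tnth_nth v) /= nth_index.
Qed.

Section DominationOptions.
Variables (V : finType) (adj : rel V) (col : V -> colour) (W : {set V}).

Lemma lopt_dom_aux k (D : {set V}) X : lopt (dom_aux adj col W k.+1 D) X <->
  exists2 v, playable adj W D v && left_col (col v) &
             X = dom_aux adj col W k (D :|: cnbhd adj W v).
Proof.
rewrite /= (exists_tnth_in_tuple _ (fun v => dom_aux adj col W k (D :|: cnbhd adj W v))).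
by split=> -[v hv ->]; exists v => //; move: hv; rewrite mem_filter mem_enum andbT.
Qed.

Lemma ropt_dom_aux k (D : {set V}) X : ropt (dom_aux adj col W k.+1 D) X <->
  exists2 v, playable adj W D v && right_col (col v) &
             X = dom_aux adj col W k (D :|: cnbhd adj W v).
Proof.
rewrite /= (exists_tnth_in_tuple _ (fun v => dom_aux adj col W k (D :|: cnbhd adj W v))).
by split=> -[v hv ->]; exists v => //; move: hv; rewrite mem_filter mem_enum andbT.
Qed.

Lemma dom_aux_dominated k (D : {set V}) : W \subset D -> giso (dom_aux adj col W k D) g0.
Proof.
case: k => [|k] hWD; first exact: giso_refl.
have unplayable v : ~~ playable adj W D v.
  rewrite /playable negb_and negbK; apply/orP; right; apply: subset_trans hWD.
  by apply/subsetP => u; rewrite inE => /andP [].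
apply/gisoE; split=> X.
- by case/lopt_dom_aux=> v /andP [hv _]; move: (unplayable v); rewrite hv.
- by move/lopt_g0.
- by case/ropt_dom_aux=> v /andP [hv _]; move: (unplayable v); rewrite hv.
- by move/ropt_g0.
Qed.

Lemma card_undominated_play (D : {set V}) v : playable adj W D v ->
  #|W :\: (D :|: cnbhd adj W v)| < #|W :\: D|.
Proof.
case/andP=> _ hv; apply: proper_card; apply/properP; split.
  by apply/subsetP => u; rewrite !inE negb_or => /andP [/andP [-> _] ->].
case/subsetPn: hv => u hu hnu; exists u.
- by rewrite in_setD hnu; move: hu; rewrite inE => /andP [->].
- by rewrite in_setD in_setU hu orbT.
Qed.

End DominationOptions.

Lemma dom_aux_swap (V : finType) (adj : rel V) (col col' : V -> colour) W k D :
  (forall v, left_col (col' v) = right_col (col v)) ->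
  (forall v, right_col (col' v) = left_col (col v)) ->
  giso (dom_aux adj col' W k D) (gneg (dom_aux adj col W k D)).
Proof.
move=> hl hr; elim: k D => [|k IH] D; first exact: giso_sym gneg0_iso.
apply/gisoE; split=> X.
- case/lopt_dom_aux=> v hv ->; exists (gneg (dom_aux adj col W k (D :|: cnbhd adj W v))) => //.
  by apply/lopt_gnegE/ropt_dom_aux; exists v; rewrite -?hl.
- case/lopt_gneg=> _ [/ropt_dom_aux [v hv ->] ->].
  exists (dom_aux adj col' W k (D :|: cnbhd adj W v)) => //.
  by apply/lopt_dom_aux; exists v; rewrite ?hl.
- case/ropt_dom_aux=> v hv ->; exists (gneg (dom_aux adj col W k (D :|: cnbhd adj W v))) => //.
  by apply/ropt_gnegE/lopt_dom_aux; exists v; rewrite -?hr.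
- case/ropt_gneg=> _ [/lopt_dom_aux [v hv ->] ->].
  exists (dom_aux adj col' W k (D :|: cnbhd adj W v)) => //.
  by apply/ropt_dom_aux; exists v; rewrite ?hr.
Qed.

Section StarDomination.
Variables (n : nat) (col : option 'I_n -> colour) (W : {set option 'I_n}).

Definition free_leaves (D : {set option 'I_n}) (x : colour) : nat :=
  #|[set i : 'I_n | (Some i \in W) && (Some i \notin D) && (col (Some i) == x)]|.

Local Notation nbhd := (cnbhd (@star_adj n) W).
Local Notation free_total D := (free_leaves D CA + free_leaves D CB + free_leaves D CC).

Lemma cnbhd_centre : nbhd None = W.
Proof. by apply/setP => u; rewrite inE; case: u => [i|] /=; rewrite andbT. Qed.

Lemma in_cnbhd_leaf i u : (u \in nbhd (Some i)) = (u \in W) && ((u == Some i) || (u == None)).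
Proof. by rewrite inE. Qed.

Lemma free_leaves_play (D : {set option 'I_n}) i x : Some i \in W -> Some i \notin D ->
  free_leaves (D :|: nbhd (Some i)) x = free_leaves D x - (col (Some i) == x).
Proof.
move=> hW hD; rewrite /free_leaves.
set S := [set j | (Some j \in W) && (Some j \notin D) && (col (Some j) == x)].
have -> : [set j | (Some j \in W) && (Some j \notin D :|: nbhd (Some i)) && (col (Some j) == x)]
          = S :\ i.
  apply/setP => j; rewrite !inE /star_adj /=.
  case: (eqVneq j i) => [-> | nji]; first by rewrite eqxx hW /= orbT.
  have -> : (Some j == Some i) = false by apply/eqP => -[]; apply/eqP.
  by case: (Some j \in W); case: (Some j \in D).
case E: (col (Some i) == x).
  by rewrite (cardsD1 i S) !inE hW hD E /= subn1.
suff -> : S :\ i = S by rewrite subn0.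
apply/setP => j; rewrite !inE.
by case: (eqVneq j i) => [-> | //]; rewrite E !andbF.
Qed.

Lemma free_leavesP (D : {set option 'I_n}) x : 0 < free_leaves D x ->
  exists i, [/\ Some i \in W, Some i \notin D & col (Some i) = x].
Proof.
rewrite /free_leaves card_gt0 => /set0Pn [i]; rewrite !inE => /andP [/andP [h1 h2] /eqP h3].
by exists i.
Qed.

Lemma free_leaves_gt0 (D : {set option 'I_n}) i : Some i \in W -> Some i \notin D ->
  0 < free_leaves D (col (Some i)).
Proof. by move=> h1 h2; rewrite card_gt0; apply/set0Pn; exists i; rewrite !inE h1 h2 eqxx. Qed.

Lemma free_total_gt0 (D : {set option 'I_n}) :
  0 < free_total D <-> exists i, Some i \in W /\ Some i \notin D.
Proof.
split; first by rewrite !addn_gt0 => /orP [/orP [] |] /free_leavesP [i [h1 h2 _]]; exists i.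
case=> i [h1 h2]; have := free_leaves_gt0 h1 h2.
by case: (col (Some i)) => h; rewrite !addn_gt0 h ?orbT.
Qed.

(* Every vertex dominates the centre, so after the first move the centre is
   dominated; the positions reached from the start satisfy [start_or_centre]. *)
Definition start_or_centre (D : {set option 'I_n}) : Prop :=
  None \in D \/ (D = set0 /\ 0 < free_total D).

Lemma playable_leaf (D : {set option 'I_n}) i : start_or_centre D ->
  playable (@star_adj n) W D (Some i) = (Some i \in W) && (Some i \notin D).
Proof.
move=> hD; rewrite /playable; case hWi: (Some i \in W) => //=.
case hDi: (Some i \in D) => /=.
  apply/negbF/subsetP => u; rewrite in_cnbhd_leaf => /andP [_ /orP [/eqP -> // | /eqP ->]].
  by case: hD => [// | [hD0 _]]; move: hDi; rewrite hD0 inE.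
by apply/subsetPn; exists (Some i); rewrite ?hDi // in_cnbhd_leaf hWi eqxx.
Qed.

Lemma playable_centre (D : {set option 'I_n}) : None \in W -> start_or_centre D ->
  playable (@star_adj n) W D None = (0 < free_total D).
Proof.
move=> hN hD; rewrite /playable hN /= cnbhd_centre.
apply/idP/idP; last by case/free_total_gt0 => i [h1 h2]; apply/subsetPn; exists (Some i).
case/subsetPn => [[i|] hi hni]; first by apply/free_total_gt0; exists i.
by case: hD => [hD | [_ ->]] //; move: hni; rewrite hD.
Qed.

Hypotheses (centreW : None \in W) (centreA : col None = CA).

Lemma start_or_centre_play (D : {set option 'I_n}) i : start_or_centre (D :|: nbhd (Some i)).
Proof. by left; rewrite in_setU in_cnbhd_leaf centreW eqxx !orbT. Qed.

Section Step.
Variables (k : nat) (D : {set option 'I_n}).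
Hypothesis hD : start_or_centre D.
Hypothesis step : forall i, Some i \in W -> Some i \notin D ->
  giso (dom_aux (@star_adj n) col W k (D :|: nbhd (Some i)))
       (star_game (free_leaves D CA - (col (Some i) == CA))
                  (free_leaves D CB - (col (Some i) == CB))
                  (free_leaves D CC - (col (Some i) == CC))).

Lemma star_dom_aux_succ : giso (dom_aux (@star_adj n) col W k.+1 D)
  (star_game (free_leaves D CA) (free_leaves D CB) (free_leaves D CC)).
Proof.
have play_centre := playable_centre centreW hD.
have centre_end : giso (dom_aux (@star_adj n) col W k (D :|: nbhd None)) g0.
  by apply: dom_aux_dominated; rewrite cnbhd_centre subsetUr.
apply/gisoE; split=> X.
- case/lopt_dom_aux=> -[i|] /andP [hp hl] ->; last first.
    by exists g0; [apply: lopt_star_game0; rewrite -play_centre | ].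
  rewrite playable_leaf // in hp; case/andP: hp => h1 h2.
  have := step h1 h2; have := free_leaves_gt0 h1 h2.
  move: hl; case: (col (Some i)) => //= _ hpos; rewrite !subn0 subn1 => hiso.
  + by eexists; first exact: lopt_star_gameA.
  + by eexists; first exact: lopt_star_gameC.
- case/lopt_star_game=> hs [-> | [ha ->] | [hc ->]].
  + by exists (dom_aux (@star_adj n) col W k (D :|: nbhd None)); rewrite // lopt_dom_aux;
      exists None; rewrite // play_centre hs centreA.
  + have [i [h1 h2 h3]] := free_leavesP ha.
    eexists; first by apply/lopt_dom_aux; exists (Some i); rewrite ?playable_leaf ?h1 ?h2 ?h3.
    by have := step h1 h2; rewrite h3 /= !subn0 subn1.
  + have [i [h1 h2 h3]] := free_leavesP hc.
    eexists; first by apply/lopt_dom_aux; exists (Some i); rewrite ?playable_leaf ?h1 ?h2 ?h3.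
    by have := step h1 h2; rewrite h3 /= !subn0 subn1.
- case/ropt_dom_aux=> -[i|] /andP [hp hr] ->; last by move: hr; rewrite centreA.
  rewrite playable_leaf // in hp; case/andP: hp => h1 h2.
  have := step h1 h2; have := free_leaves_gt0 h1 h2.
  move: hr; case: (col (Some i)) => //= _ hpos; rewrite !subn0 subn1 => hiso.
  + by eexists; first exact: ropt_star_gameB.
  + by eexists; first exact: ropt_star_gameC.
- case/ropt_star_game=> -[hx ->].
  + have [i [h1 h2 h3]] := free_leavesP hx.
    eexists; first by apply/ropt_dom_aux; exists (Some i); rewrite ?playable_leaf ?h1 ?h2 ?h3.
    by have := step h1 h2; rewrite h3 /= !subn0 subn1.
  + have [i [h1 h2 h3]] := free_leavesP hx.
    eexists; first by apply/ropt_dom_aux; exists (Some i); rewrite ?playable_leaf ?h1 ?h2 ?h3.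
    by have := step h1 h2; rewrite h3 /= !subn0 subn1.
Qed.
End Step.

Lemma star_dom_aux k (D : {set option 'I_n}) : #|W :\: D| < k -> start_or_centre D ->
  giso (dom_aux (@star_adj n) col W k D)
       (star_game (free_leaves D CA) (free_leaves D CB) (free_leaves D CC)).
Proof.
elim: k D => [// | k IH] D hk hD; apply: star_dom_aux_succ => // i h1 h2.
rewrite -!free_leaves_play //; apply: IH; last exact: start_or_centre_play.
apply: leq_trans (card_undominated_play _) _; last by rewrite -ltnS.
by rewrite playable_leaf // h1 h2.
Qed.

End StarDomination.

Lemma dom_game_star n (col : option 'I_n -> colour) (W : {set option 'I_n}) :
  None \in W -> col None = CA -> (exists i, Some i \in W) ->
  giso (dom_game (@star_adj n) col W)
       (star_game (free_leaves col W set0 CA) (free_leaves col W set0 CB)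
                  (free_leaves col W set0 CC)).
Proof.
move=> hN hA [i hi]; apply: star_dom_aux => //; first by rewrite ltnS max_card.
by right; split=> //; apply/free_total_gt0; exists i; rewrite inE.
Qed.

Lemma free_leaves_setT n (col : option 'I_n -> colour) x :
  free_leaves col setT set0 x = #|[set i : 'I_n | col (Some i) == x]|.
Proof. by apply: eq_card => i; rewrite !inE. Qed.

Lemma free_leaves_noC n (col : option 'I_n -> colour) x :
  free_leaves col [set v | (v == None) || (col v != CC)] set0 x =
  if x == CC then 0 else #|[set i : 'I_n | col (Some i) == x]|.
Proof.
case: ifP => [/eqP -> | hx]; last by apply: eq_card => i; rewrite !inE; case: x hx; case: (col _).
by apply/eqP; rewrite cards_eq0; apply/eqP/setP => i; rewrite !inE; case: (col _).
Qed.

Lemma card_leaf_colours n (col : option 'I_n -> colour) :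
  #|[set i : 'I_n | col (Some i) == CA]| + #|[set i : 'I_n | col (Some i) == CB]|
  + #|[set i : 'I_n | col (Some i) == CC]| = n.
Proof.
transitivity #|[set: 'I_n]|; last by rewrite cardsT card_ord.
rewrite -(cardsID [set i | col (Some i) == CA] [set: 'I_n]).
rewrite -(cardsID [set i | col (Some i) == CB] ([set: 'I_n] :\: _)) addnA.
congr (_ + _ + _).
all: by apply: eq_card => i; rewrite !inE; case: (col _).
Qed.

Theorem theorem8 (n : nat) (col : option 'I_n -> colour) :
  let a := #|[set i : 'I_n | col (Some i) == CA]| in
  let c := #|[set i : 'I_n | col (Some i) == CC]| in
  let G := dom_game (@star_adj n) col setT in
  (1 <= c)%N ->
  (col None = CA ->
     (a = 0 ->
        (~~ odd n -> game_eq G (mul_up n.-1)) /\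
        (odd n -> game_eq G (gadd (mul_up n.-1) gstar))) /\
     ((0 < a)%N ->
        let J := dom_game (@star_adj n) col
                   [set x | (x == None) || (col x != CC)] in
        (~~ odd c -> game_eq G J) /\
        (odd c -> game_eq G (gadd J gstar))))
  /\
  (col None = CB ->
     game_eq G (gneg (dom_game (@star_adj n) (fun x => swap_col (col x)) setT))).
Proof.
move=> a c G hc; split=> [hA | _]; last first.
  by apply/game_eqE/giso_gequiv/dom_aux_swap => v; case: (col v).
set b := #|[set i : 'I_n | col (Some i) == CB]|.
have [i _] : exists i, i \in [set i : 'I_n | col (Some i) == CC] by apply/card_gt0P.
have hG : gequiv G (star_game a b c).
  apply: giso_gequiv; have := dom_game_star (col := col) (W := setT).
  by rewrite !free_leaves_setT; apply=> //; [rewrite inE | exists i; rewrite inE].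
have hsum : a + b + c = n := card_leaf_colours col.
split=> [ha0 | ha J].
  have hU : gequiv G (up_tower n) by rewrite hG ha0 star_game0_tower -hsum ha0.
  have hn0 : 0 < n by lia.
  have [heven hodd] := up_tower_mul_up hn0.
  by split=> hp; apply/game_eqE; rewrite hU; [apply: heven | apply: hodd].
have hJ : gequiv J (star_game a b 0).
  apply: giso_gequiv.
  have := dom_game_star (col := col) (W := [set x | (x == None) || (col x != CC)]).
  rewrite !free_leaves_noC /=; apply=> //; first by rewrite inE.
  by have /card_gt0P [j] := ha; rewrite inE => /eqP hj; exists j; rewrite inE hj.
have [hodd heven] := star_game_parity b c ha.
by split=> hpar; apply/game_eqE; rewrite hG hJ; [apply: heven | apply: hodd].
Qed.
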